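(* Let $\theta=(\{X_g\},\{\theta_g\})$ be an ordered partial action of a groupoid $\mathcal{G}$ on a semilatticeoid $X$ such that $X_g\neq\emptyset$ for every $g\in\mathcal{G}$. Let $(\eta,E,i)$ be the ordered globalization of $\theta$ given by the globalization construction (with the induced order on $E$). Then $(\mathcal{G},E,i(X))$ is a McAlister triple.
   Context: Inverse semigroupoid: arrows $\mathcal{S}$, objects $\mathcal{S}^{(0)}$, maps $d,c$, associative multiplication on $\mathcal{S}^{(2)}=\{(s,t):d(s)=c(t)\}$ with $d(st)=d(t)$, $c(st)=c(s)$, unique $s^*$ with $ss^*s=s$, $s^*ss^*=s^*$; $E(\mathcal{S})$ = idempotents; natural order on parallel arrows $s\leqslant t$ iff $s=te$ for an idempotent $e$ with $(t,e)\in\mathcal{S}^{(2)}$. A groupoid is an inverse semigroupoid with exactly one idempotent (the identity) over each object; the inverse of $g$ is written $g^{-1}$. A semilatticeoid is an inverse semigroupoid all of whose elements are idempotent (a disjoint union of meet semilattices, one per object), ordered by its natural order. A partial action of $\mathcal{S}$ on a set $X$ is a pair $(\{X_s\},\{\theta_s\})$, $X_s\subseteq X$, $\theta_s:X_{s^*}\to X_s$, with: each $\theta_s$ bijective, $\theta_s^{-1}=\theta_{s^*}$, $X=\bigcup_sX_s$; $\theta_s\circ\theta_t\subseteq\theta_{st}$ for $(s,t)\in\mathcal{S}^{(2)}$; $X_s\subseteq X_t$ if $s\leqslant t$. Global: $\theta_s\circ\theta_t=\theta_{st}$. Ordered (on a poset): each $X_s$ an order ideal, each $\theta_s$ an order isomorphism.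 Orbit of $Y\subseteq E$ under a global action $\eta$: $\bigcup_s\eta_s(Y\cap E_{s^*})$. A McAlister triple $(\mathcal{G},E,X)$ consists of a groupoid $\mathcal{G}$, a poset $E$, an order ideal $X$ of $E$ which is a semilatticeoid under the induced order, and an ordered global action $\eta$ of $\mathcal{G}$ on $E$ such that the orbit of $X$ is $E$ and $\eta_g(X\cap E_{g^{-1}})\cap X\neq\emptyset$ for all $g\in\mathcal{G}$. Globalization construction: $D=\{(s,x)\in\mathcal{S}\times X:x\in X_{s^*s}\}$; $(s,x)\sim(t,y)$ iff (R1) $(t^*,s)\in\mathcal{S}^{(2)}$, $x\in X_{s^*t}$, $\theta_{t^*s}(x)=y$, or (R2) $s,t\in E(\mathcal{S})$ and $x=y$; $\approx$ the equivalence relation generated by $\sim$; $E=D/{\approx}$ with classes $[s,x]$; $D_s=\{(p,x)\in D:(s^*,p)\in\mathcal{S}^{(2)},x\in X_{p^*ss^*p}\}$, $E_s=\{[p,x]:(p,x)\in D_s\}$, $\eta_s([p,x])=[sp,x]$ for $(p,x)\in D_{s^*}$; $i(x)=[e,x]$ for any idempotent $e$ with $x\in X_e$. Order on $E$: $[s,x]\leqslant[t,y]$ iff there exist $(r,y')\in D$, $x'\in X$ with $(r,y')\approx(t,y)$, $x'\leqslant y'$, $(r,x')\approx(s,x)$. It is known that then $\eta$ is an ordered global action on $E$, $i$ is an injective order embedding onto the order ideal $i(X)$, and the orbit of $i(X)$ is $E$. *)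

From Stdlib Require Import Relations.

Section InverseSemigroupoid.
Context {O A : Type} (d c : A -> O) (mul : A -> A -> A) (star : A -> A).

Definition composable (s t : A) : Prop := d s = c t.

(* Inverse semigroupoid axioms; [mul] is total but only meaningful on S^(2);
   [star s] is the unique s^* with s s^* s = s and s^* s s^* = s^*. *)
Record is_inv_semigroupoid : Prop := {
  isg_dom : forall s t, composable s t -> d (mul s t) = d t;
  isg_cod : forall s t, composable s t -> c (mul s t) = c s;
  isg_assoc : forall s t u, composable s t -> composable t u ->
      mul (mul s t) u = mul s (mul t u);
  isg_star_dom : forall s, d (star s) = c s;
  isg_star_cod : forall s, c (star s) = d s;
  isg_star1 : forall s, mul s (mul (star s) s) = s;
  isg_star2 : forall s, mul (star s) (mul s (star s)) = star s;
  isg_star_uniq : forall s t, d t = c s -> c t = d s ->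
      mul s (mul t s) = s -> mul t (mul s t) = t -> t = star s
}.

Definition idempotent (e : A) : Prop := composable e e /\ mul e e = e.

Definition natle (s t : A) : Prop :=
  d s = d t /\ c s = c t /\ exists e, idempotent e /\ composable t e /\ s = mul t e.

Definition is_groupoid : Prop :=
  is_inv_semigroupoid /\
  forall x : O, exists e, (idempotent e /\ d e = x) /\
     forall e', idempotent e' /\ d e' = x -> e' = e.

Definition is_semilatticeoid : Prop :=
  is_inv_semigroupoid /\ forall s, idempotent s.

Record partial_action {T : Type} (car : T -> Prop)
    (Xs : A -> T -> Prop) (th : A -> T -> T) : Prop := {
  pa_sub : forall s x, Xs s x -> car x;
  pa_maps : forall s x, Xs (star s) x -> Xs s (th s x);
  pa_inj : forall s x y, Xs (star s) x -> Xs (star s) y -> th s x = th s y -> x = y;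
  pa_surj : forall s y, Xs s y -> exists x, Xs (star s) x /\ th s x = y;
  pa_inv : forall s x, Xs (star s) x -> th (star s) (th s x) = x;
  pa_cover : forall x, car x -> exists s, Xs s x;
  (* theta_s o theta_t included in theta_st *)
  pa_comp : forall s t x, composable s t ->
      Xs (star t) x -> Xs (star s) (th t x) ->
      Xs (star (mul s t)) x /\ th (mul s t) x = th s (th t x);
  pa_mono : forall s t x, natle s t -> Xs s x -> Xs t x
}.

(* global: theta_s o theta_t = theta_st (equal domains as well) *)
Definition global_action {T : Type} (car : T -> Prop)
    (Xs : A -> T -> Prop) (th : A -> T -> T) : Prop :=
  partial_action car Xs th /\
  forall s t x, composable s t -> Xs (star (mul s t)) x ->
     Xs (star t) x /\ Xs (star s) (th t x).

Definition ordered_action {T : Type} (car : T -> Prop) (le : T -> T -> Prop)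
    (Xs : A -> T -> Prop) (th : A -> T -> T) : Prop :=
  (forall s x y, Xs s y -> car x -> le x y -> Xs s x) /\
  (forall s x y, Xs (star s) x -> Xs (star s) y ->
      (le x y <-> le (th s x) (th s y))).

End InverseSemigroupoid.

Definition partial_order_on {T : Type} (car : T -> Prop) (le : T -> T -> Prop) : Prop :=
  (forall x, car x -> le x x) /\
  (forall x y, car x -> car y -> le x y -> le y x -> x = y) /\
  (forall x y z, car x -> car y -> car z -> le x y -> le y z -> le x z).

(* A subset [Xsub] of a poset is a semilatticeoid under the induced order:
   there is a semilatticeoid whose arrows are in bijection with [Xsub] and
   whose natural order corresponds to the induced order. *)
Definition semilatticeoid_under {T : Type} (Xsub : T -> Prop) (le : T -> T -> Prop) : Prop :=
  exists (O' A' : Type) (d' c' : A' -> O') (mul' : A' -> A' -> A') (star' : A' -> A')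
         (f : A' -> T),
    is_semilatticeoid d' c' mul' star' /\
    (forall a, Xsub (f a)) /\
    (forall a b, f a = f b -> a = b) /\
    (forall t, Xsub t -> exists a, f a = t) /\
    (forall a b, natle d' c' mul' a b <-> le (f a) (f b)).

Definition mcalister_triple {O A T : Type} (d c : A -> O) (mul : A -> A -> A)
    (star : A -> A) (Ecar : T -> Prop) (le : T -> T -> Prop) (Xsub : T -> Prop)
    (Es : A -> T -> Prop) (eta : A -> T -> T) : Prop :=
  is_groupoid d c mul star /\
  partial_order_on Ecar le /\
  (forall x, Xsub x -> Ecar x) /\
  (forall x y, Xsub y -> Ecar x -> le x y -> Xsub x) /\
  semilatticeoid_under Xsub le /\
  global_action d c mul star Ecar Es eta /\
  ordered_action star Ecar le Es eta /\
  (forall C, Ecar C <-> exists g y, Xsub y /\ Es (star g) y /\ C = eta g y) /\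
  (forall g, exists y, Xsub y /\ Es (star g) y /\ Xsub (eta g y)).

Section Globalization.
Context {O A X : Type} (d c : A -> O) (mul : A -> A -> A) (star : A -> A)
  (Xs : A -> X -> Prop) (th : A -> X -> X) (leX : X -> X -> Prop).

Definition Dset (p : A * X) : Prop := Xs (mul (star (fst p)) (fst p)) (snd p).

Definition glob_sim (p q : A * X) : Prop :=
  Dset p /\ Dset q /\
  ( (d (star (fst q)) = c (fst p) /\
     Xs (mul (star (fst p)) (fst q)) (snd p) /\
     th (mul (star (fst q)) (fst p)) (snd p) = snd q)
    \/ (idempotent d c mul (fst p) /\ idempotent d c mul (fst q) /\ snd p = snd q) ).

Definition glob_approx : relation (A * X) := clos_refl_sym_trans _ glob_sim.

Definition cls (p : A * X) : A * X -> Prop := glob_approx p.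

(* E = D / approx, as a set of classes *)
Definition Ecar (C : A * X -> Prop) : Prop := exists p, Dset p /\ C = cls p.

Definition Dsub (s : A) (p : A * X) : Prop :=
  Dset p /\ d (star s) = c (fst p) /\
  Xs (mul (star (fst p)) (mul (mul s (star s)) (fst p))) (snd p).

Definition Es (s : A) (C : A * X -> Prop) : Prop := exists p, Dsub s p /\ C = cls p.

(* eta_s([p,x]) = [sp,x] for (p,x) in D_{s*} *)
Definition eta (s : A) (C : A * X -> Prop) : A * X -> Prop :=
  fun q => exists p, C p /\ Dsub (star s) p /\ glob_approx (mul s (fst p), snd p) q.

(* i(x) = [e,x] for any idempotent e with x in X_e *)
Definition iota (x : X) : A * X -> Prop :=
  fun q => exists e, idempotent d c mul e /\ Xs e x /\ glob_approx (e, x) q.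

Definition leE (C C' : A * X -> Prop) : Prop :=
  exists s x t y, Dset (s, x) /\ C = cls (s, x) /\ Dset (t, y) /\ C' = cls (t, y) /\
  exists r y' x', Dset (r, y') /\ glob_approx (r, y') (t, y) /\ leX x' y' /\
                  glob_approx (r, x') (s, x).

End Globalization.

From Stdlib Require Import Relations FunctionalExtensionality PropExtensionality.

(* Over a groupoid, (R1) already is an equivalence relation on points [(s, x)]
   and [(t, y)] with [c s = c t]; the generated relation [approx] only adds the
   links through identity arrows forced by (R2).  With this explicit description
   [eta] acts by left multiplication on arrows, and every class below [[t, y]]
   is some [[t, x]] with [x <= y]: comparisons are transported along (R1)
   because each [th g] is an order isomorphism between order ideals.  The McAlister axioms then become
   computations on representatives: [i] is an order embedding onto a down-set,
   [[t, x] = eta_t (i x)] gives the orbit condition, and for [x] in the nonempty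
   [X_{g^-1}] one gets [eta_g (i x) = i (th g x)]. *)

Section InverseSemigroupoid.
Context {O A : Type} {d c : A -> O} {mul : A -> A -> A} {star : A -> A}.
Hypothesis HS : is_inv_semigroupoid d c mul star.

Local Notation idem := (idempotent d c mul).

Lemma d_mul s t : d s = c t -> d (mul s t) = d t.
Proof. exact (isg_dom _ _ _ _ HS s t). Qed.

Lemma c_mul s t : d s = c t -> c (mul s t) = c s.
Proof. exact (isg_cod _ _ _ _ HS s t). Qed.

Lemma d_star s : d (star s) = c s.
Proof. exact (isg_star_dom _ _ _ _ HS s). Qed.

Lemma c_star s : c (star s) = d s.
Proof. exact (isg_star_cod _ _ _ _ HS s). Qed.

Lemma mul_assoc s t u : d s = c t -> d t = c u -> mul (mul s t) u = mul s (mul t u).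
Proof. exact (isg_assoc _ _ _ _ HS s t u). Qed.

Lemma mul_star_mul s : mul s (mul (star s) s) = s.
Proof. exact (isg_star1 _ _ _ _ HS s). Qed.

Lemma star_mul_star s : mul (star s) (mul s (star s)) = star s.
Proof. exact (isg_star2 _ _ _ _ HS s). Qed.

Lemma star_star s : star (star s) = s.
Proof.
  symmetry. apply (isg_star_uniq _ _ _ _ HS (star s) s).
  - rewrite c_star; reflexivity.
  - rewrite d_star; reflexivity.
  - apply star_mul_star.
  - apply mul_star_mul.
Qed.

Lemma idem_dc {e} : idem e -> d e = c e.
Proof. intros [H _]. exact H. Qed.

Lemma star_idem e : idem e -> star e = e.
Proof.
  intros [He1 He2]. symmetry. apply (isg_star_uniq _ _ _ _ HS e e).
  - exact He1.
  - symmetry; exact He1.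
  - rewrite He2, He2; reflexivity.
  - rewrite He2, He2; reflexivity.
Qed.

Lemma d_mul_star s : d (mul s (star s)) = c s.
Proof. rewrite d_mul by (rewrite c_star; reflexivity). apply d_star. Qed.

Lemma c_mul_star s : c (mul s (star s)) = c s.
Proof. apply c_mul. rewrite c_star; reflexivity. Qed.

Lemma d_star_mul s : d (mul (star s) s) = d s.
Proof. apply d_mul. rewrite d_star; reflexivity. Qed.

Lemma c_star_mul s : c (mul (star s) s) = d s.
Proof. rewrite c_mul by (rewrite d_star; reflexivity). apply c_star. Qed.

Lemma idem_mul_star s : idem (mul s (star s)).
Proof.
  split.
  - unfold composable. rewrite d_mul_star, c_mul_star. reflexivity.
  - rewrite mul_assoc, star_mul_star; [reflexivity | |].
    + rewrite c_star; reflexivity.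
    + rewrite d_star, c_mul_star; reflexivity.
Qed.

Lemma idem_star_mul s : idem (mul (star s) s).
Proof. pose proof (idem_mul_star (star s)) as H. rewrite star_star in H. exact H. Qed.

End InverseSemigroupoid.

Section Groupoid.
Context {O A : Type} {d c : A -> O} {mul : A -> A -> A} {star : A -> A}.
Hypothesis HG : is_groupoid d c mul star.

Let HS : is_inv_semigroupoid d c mul star := proj1 HG.

Local Notation idem := (idempotent d c mul).

Lemma idem_eq e f : idem e -> idem f -> d e = d f -> e = f.
Proof.
  intros He Hf Hd. destruct (proj2 HG (d e)) as [u [_ Hu]].
  rewrite (Hu e (conj He eq_refl)), (Hu f (conj Hf (eq_sym Hd))). reflexivity.
Qed.

Lemma mul_star_eq s t : c s = c t -> mul s (star s) = mul t (star t).
Proof.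
  intro H. apply idem_eq; try apply (idem_mul_star HS).
  rewrite !(d_mul_star HS). exact H.
Qed.

Lemma mul_idem_l e s : idem e -> d e = c s -> mul e s = s.
Proof.
  intros He H. assert (e = mul s (star s)) as ->.
  { apply idem_eq; [exact He | apply (idem_mul_star HS) | rewrite (d_mul_star HS); exact H]. }
  rewrite (mul_assoc HS); [apply (mul_star_mul HS) | |].
  - rewrite (c_star HS); reflexivity.
  - rewrite (d_star HS); reflexivity.
Qed.

Lemma mul_idem_r e s : idem e -> c e = d s -> mul s e = s.
Proof.
  intros He H. assert (e = mul (star s) s) as ->.
  { apply idem_eq; [exact He | apply (idem_star_mul HS) |].
    rewrite (d_star_mul HS), (idem_dc He); exact H. }
  apply (mul_star_mul HS).
Qed.

Lemma mul_star_cancel_l s p : d s = c p -> mul (star s) (mul s p) = p.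
Proof.
  intro H. rewrite <- (mul_assoc HS); [| rewrite (d_star HS); reflexivity | exact H].
  apply mul_idem_l; [apply (idem_star_mul HS) |]. rewrite (d_star_mul HS); auto.
Qed.

Lemma mul_star_cancel_r s p : c s = c p -> mul s (mul (star s) p) = p.
Proof.
  intro H. rewrite <- (mul_assoc HS); [| rewrite (c_star HS); reflexivity | rewrite (d_star HS); auto].
  apply mul_idem_l; [apply (idem_mul_star HS) |]. rewrite (d_mul_star HS); auto.
Qed.

Lemma star_mul s t : d s = c t -> star (mul s t) = mul (star t) (star s).
Proof.
  intro H. symmetry. apply (isg_star_uniq _ _ _ _ HS (mul s t) (mul (star t) (star s))).
  - rewrite (d_mul HS), (d_star HS), (c_mul HS); auto; rewrite (d_star HS), (c_star HS); auto.
  - rewrite (c_mul HS), (c_star HS), (d_mul HS); auto; rewrite (d_star HS), (c_star HS); auto.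
  - rewrite (mul_assoc HS (star t)) by (rewrite ?(d_star HS), ?(c_star HS), ?(c_mul HS); auto).
    rewrite mul_star_cancel_l by auto. apply mul_idem_r; [apply (idem_star_mul HS) |].
    rewrite (c_star_mul HS), (d_mul HS); auto.
  - assert (Ht : d t = c (mul (star t) (star s))).
    { rewrite (c_mul HS), (c_star HS); [reflexivity |].
      rewrite (d_star HS), (c_star HS); congruence. }
    rewrite (mul_assoc HS s t _ H Ht), mul_star_cancel_r by (rewrite (c_star HS); congruence).
    apply mul_idem_r; [apply (idem_mul_star HS) |].
    rewrite (c_mul_star HS), (d_mul HS) by (rewrite (d_star HS), (c_star HS); congruence).
    rewrite (d_star HS); reflexivity.
Qed.

Lemma star_mul_starl s t : c s = c t -> star (mul (star s) t) = mul (star t) s.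
Proof.
  intro H. rewrite star_mul by (rewrite (d_star HS); exact H). rewrite (star_star HS). reflexivity.
Qed.

Lemma star_mul_mul s t u : d s = c t -> d s = c u ->
  mul (star (mul s t)) (mul s u) = mul (star t) u.
Proof.
  intros Ht Hu. rewrite star_mul, (mul_assoc HS), mul_star_cancel_l by
    (rewrite ?(d_star HS), ?(c_star HS), ?(c_mul HS); auto).
  reflexivity.
Qed.

End Groupoid.

Section Semilatticeoid.
Context {O X : Type} {d c : X -> O} {mul : X -> X -> X} {star : X -> X}.
Hypothesis HX : is_semilatticeoid d c mul star.

Local Notation le := (natle d c mul).

Let HS : is_inv_semigroupoid d c mul star := proj1 HX.

Lemma natle_refl x : le x x.
Proof.
  destruct (proj2 HX x) as [H1 H2].
  split; [reflexivity | split; [reflexivity |]].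
  exists x. split; [exact (proj2 HX x) | split; [exact H1 | symmetry; exact H2]].
Qed.

Lemma natle_mul x y : le x y -> mul y x = x.
Proof.
  intros [_ [_ [e [_ [Hye ->]]]]].
  rewrite <- (mul_assoc HS y y e (proj1 (proj2 HX y)) Hye), (proj2 (proj2 HX y)).
  reflexivity.
Qed.

Lemma natle_trans x y z : le x y -> le y z -> le x z.
Proof.
  intros Hxy Hyz. pose proof (natle_mul x y Hxy) as E1. pose proof (natle_mul y z Hyz) as E2.
  destruct Hxy as [D1 [C1 _]], Hyz as [D2 [C2 _]].
  destruct (proj2 HX x) as [Hx1 Hx2]. destruct (proj2 HX y) as [Hy1 _].
  destruct (proj2 HX z) as [Hz1 _]. unfold composable in *.
  split; [congruence | split; [congruence |]].
  exists x. split; [apply (proj2 HX) | split; [congruence |]].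
  transitivity (mul (mul z y) x); [rewrite E2, E1; reflexivity |].
  rewrite (mul_assoc HS), E1 by congruence. reflexivity.
Qed.

(* Over a fixed object both [mul x y] and [mul y x] are idempotent, and [mul y x]
   is an inverse of [mul x y]; uniqueness of inverses identifies them. *)
Lemma mul_comm_parallel x y : d x = d y -> mul x y = mul y x.
Proof.
  intro Hxy.
  assert (HD : forall a, d a = c a) by (intro a; exact (proj1 (proj2 HX a))).
  assert (HI : forall a, mul a a = a) by (intro a; exact (proj2 (proj2 HX a))).
  set (P := fun t => d t = d x /\ c t = d x).
  assert (Px : P x) by (split; [reflexivity | symmetry; apply HD]).
  assert (Py : P y) by (split; [symmetry; exact Hxy | rewrite <- HD; symmetry; exact Hxy]).
  assert (Pc : forall a b, P a -> P b -> d a = c b) by (intros a b [] []; congruence).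
  assert (Pm : forall a b, P a -> P b -> P (mul a b)).
  { intros a b Pa Pb. pose proof (Pc a b Pa Pb) as Hab. destruct Pa, Pb.
    split; [rewrite (d_mul HS) | rewrite (c_mul HS), <- HD]; auto. }
  assert (Ha : forall a b g, P a -> P b -> P g -> mul (mul a b) g = mul a (mul b g))
    by (intros; apply (mul_assoc HS); apply Pc; auto).
  assert (Hdup : forall a b, P a -> P b -> mul a (mul a b) = mul a b)
    by (intros; rewrite <- Ha, HI by auto; reflexivity).
  assert (Hinv : mul y x = star (mul x y)).
  { apply (isg_star_uniq _ _ _ _ HS).
    - apply Pc; apply Pm; auto.
    - rewrite <- HD, (HD (mul x y)). apply Pc; apply Pm; auto.
    - repeat rewrite Ha by (repeat apply Pm; assumption).
      repeat rewrite Hdup by (repeat apply Pm; assumption).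
      rewrite <- (Ha x y (mul x y)) by (repeat apply Pm; assumption). apply HI.
    - repeat rewrite Ha by (repeat apply Pm; assumption).
      repeat rewrite Hdup by (repeat apply Pm; assumption).
      rewrite <- (Ha y x (mul y x)) by (repeat apply Pm; assumption). apply HI. }
  rewrite Hinv, (star_idem HS _ (proj2 HX (mul x y))). reflexivity.
Qed.

Lemma natle_antisym x y : le x y -> le y x -> x = y.
Proof.
  intros Hxy Hyx. transitivity (mul y x); [symmetry; exact (natle_mul x y Hxy) |].
  rewrite mul_comm_parallel by exact (proj1 Hyx). exact (natle_mul y x Hyx).
Qed.

End Semilatticeoid.

Section PartialAction.
Context {O A T : Type} {d c : A -> O} {mul : A -> A -> A} {star : A -> A}.
Hypothesis HS : is_inv_semigroupoid d c mul star.
Context {car : T -> Prop} {Xs : A -> T -> Prop} {th : A -> T -> T}.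
Hypothesis Hpa : partial_action d c mul star car Xs th.

Local Notation idem := (idempotent d c mul).

Lemma th_maps s x : Xs (star s) x -> Xs s (th s x).
Proof. apply (pa_maps _ _ _ _ _ _ _ Hpa). Qed.

Lemma th_star_th s x : Xs (star s) x -> th (star s) (th s x) = x.
Proof. apply (pa_inv _ _ _ _ _ _ _ Hpa). Qed.

Lemma th_idem e x : idem e -> Xs e x -> th e x = x.
Proof.
  intros He Hx. rewrite <- (star_idem HS e He) in Hx.
  assert (Hy : Xs (star e) (th e x)) by (rewrite (star_idem HS e He); apply th_maps; exact Hx).
  destruct (pa_comp _ _ _ _ _ _ _ Hpa e e x (idem_dc He) Hx Hy) as [_ H].
  rewrite (proj2 He) in H.
  symmetry. exact (pa_inj _ _ _ _ _ _ _ Hpa e x (th e x) Hx Hy H).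
Qed.

Lemma Xs_mul_star s x : Xs s x -> Xs (mul s (star s)) x.
Proof.
  intro Hx. rewrite <- (star_star HS s) in Hx.
  destruct (pa_comp _ _ _ _ _ _ _ Hpa s (star s) x) as [H _].
  - unfold composable. rewrite (c_star HS); reflexivity.
  - exact Hx.
  - apply th_maps; exact Hx.
  - rewrite (star_idem HS _ (idem_mul_star HS s)) in H. exact H.
Qed.

Lemma Xs_cover_idem x : car x -> exists e, idem e /\ Xs e x.
Proof.
  intro Hx. destruct (pa_cover _ _ _ _ _ _ _ Hpa x Hx) as [s Hs].
  exists (mul s (star s)). split; [apply (idem_mul_star HS) | apply Xs_mul_star; exact Hs].
Qed.

End PartialAction.

Section Globalization.
Context {O A X : Type} {d c : A -> O} {mul : A -> A -> A} {star : A -> A}.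
Hypothesis HG : is_groupoid d c mul star.
Context {Xs : A -> X -> Prop} {th : A -> X -> X}.
Hypothesis Hpa : partial_action d c mul star (fun _ : X => True) Xs th.

Let HS : is_inv_semigroupoid d c mul star := proj1 HG.

Local Notation idem := (idempotent d c mul).
Local Notation lid s := (mul s (star s)).
Local Notation D := (Dset mul star Xs).
Local Notation approx := (glob_approx d c mul star Xs th).
Local Notation sim := (glob_sim d c mul star Xs th).
Local Notation cl := (cls d c mul star Xs th).

(* Relation (R1) of the construction; in a groupoid, [(t^*, s)] is composable
   exactly when [c s = c t]. *)
Definition R1 (p q : A * X) : Prop :=
  D p /\ D q /\ c (fst q) = c (fst p) /\ Xs (mul (star (fst p)) (fst q)) (snd p) /\
  th (mul (star (fst q)) (fst p)) (snd p) = snd q.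

(* Explicit form of [approx] off the diagonal: (R2) only links points over
   identities, and [(s, x)] with [x] in [X_{s^*}] is (R1)-related to
   [(s s^*, th s x)]. *)
Definition approx_expl (p q : A * X) : Prop :=
  R1 p q \/ exists z, R1 p (lid (fst p), z) /\ R1 q (lid (fst q), z).

Lemma D_idem e x : idem e -> (D (e, x) <-> Xs e x).
Proof. intro He. unfold Dset; simpl. rewrite (star_idem HS e He), (proj2 He). tauto. Qed.

Lemma lid_idem e : idem e -> lid e = e.
Proof. intro He. rewrite (star_idem HS e He). exact (proj2 He). Qed.

Lemma R1_refl p : D p -> R1 p p.
Proof.
  destruct p as [s x]. intro H. unfold R1; simpl.
  repeat split; auto. apply (th_idem HS Hpa); auto. apply (idem_star_mul HS).
Qed.

Lemma R1_sym p q : R1 p q -> R1 q p.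
Proof.
  destruct p as [s x], q as [t y]. unfold R1; simpl. intros [H1 [H2 [H3 [H4 H5]]]].
  assert (Hst : star (mul (star t) s) = mul (star s) t) by (apply (star_mul_starl HG); auto).
  repeat split; auto.
  - rewrite <- H5. apply (th_maps Hpa). rewrite Hst. exact H4.
  - rewrite <- H5, <- Hst. apply (th_star_th Hpa). rewrite Hst. exact H4.
Qed.

Lemma R1_trans p q r : R1 p q -> R1 q r -> R1 p r.
Proof.
  destruct p as [s x], q as [t y], r as [u z]. unfold R1; simpl.
  intros [H1 [H2 [H3 [H4 H5]]]] [G1 [G2 [G3 [G4 G5]]]].
  assert (Hcomp : d (mul (star u) t) = c (mul (star t) s)).
  { rewrite (d_mul HS), (c_mul HS), (c_star HS); rewrite ?(d_star HS); congruence. }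
  assert (Hm : mul (mul (star u) t) (mul (star t) s) = mul (star u) s).
  { rewrite (mul_assoc HS), (mul_star_cancel_r HG) by
      (rewrite ?(d_star HS), ?(c_mul HS), ?(c_star HS); rewrite ?(d_star HS); congruence).
    reflexivity. }
  destruct (pa_comp _ _ _ _ _ _ _ Hpa (mul (star u) t) (mul (star t) s) x Hcomp) as [K1 K2].
  - rewrite (star_mul_starl HG) by congruence. exact H4.
  - rewrite (star_mul_starl HG), H5 by congruence. exact G4.
  - rewrite Hm, (star_mul_starl HG) in K1 by congruence. rewrite Hm in K2.
    repeat split; auto; [congruence | rewrite K2, H5; exact G5].
Qed.

Lemma R1_cod p q : R1 p q -> c (fst q) = c (fst p).
Proof. intros [_ [_ [H _]]]. exact H. Qed.

Lemma R1_lid s x : D (s, x) -> Xs (star s) x -> R1 (s, x) (lid s, th s x).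
Proof.
  intros H1 H2. unfold R1; simpl.
  rewrite (star_idem HS _ (idem_mul_star HS s)), (star_mul_star HS).
  repeat split; auto.
  - apply D_idem; [apply (idem_mul_star HS) |].
    apply (Xs_mul_star HS Hpa), (th_maps Hpa); exact H2.
  - apply (c_mul_star HS).
  - rewrite (mul_idem_l HG); [reflexivity | apply (idem_mul_star HS) | apply (d_mul_star HS)].
Qed.

Lemma R1_idem e x f y : idem e -> idem f -> R1 (e, x) (f, y) -> x = y.
Proof.
  intros He Hf [H1 [_ [H3 [_ H5]]]]. simpl in *.
  assert (f = e) as ->.
  { apply (idem_eq HG); auto. rewrite (idem_dc Hf), (idem_dc He). exact H3. }
  rewrite (star_idem HS e He), (proj2 He) in H5. rewrite <- H5.
  symmetry. apply (th_idem HS Hpa); auto. apply (D_idem e x He). exact H1.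
Qed.

Lemma R1_sim p q : R1 p q -> sim p q.
Proof.
  destruct p as [s x], q as [t y]. intros [H1 [H2 [H3 [H4 H5]]]]. simpl in *.
  unfold glob_sim; simpl. repeat split; auto. left. repeat split; auto.
  rewrite (d_star HS); auto.
Qed.

Lemma sim_approx_expl p q : sim p q -> approx_expl p q.
Proof.
  destruct p as [s x], q as [t y]. unfold glob_sim; simpl.
  intros [H1 [H2 [[K1 [K2 K3]] | [K1 [K2 <-]]]]].
  - left. unfold R1; simpl. repeat split; auto. rewrite <- (d_star HS t). exact K1.
  - right. exists x. simpl. rewrite (lid_idem s K1), (lid_idem t K2).
    split; apply R1_refl; auto.
Qed.

Lemma approx_expl_sym p q : approx_expl p q -> approx_expl q p.
Proof.
  intros [H | [z [H1 H2]]]; [left; apply R1_sym; exact H | right; exists z; auto].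
Qed.

Lemma approx_expl_trans p q r : approx_expl p q -> approx_expl q r -> approx_expl p r.
Proof.
  intros [H | [z [H1 H2]]] [G | [z' [G1 G2]]].
  - left. eapply R1_trans; eauto.
  - right. exists z'. split; auto. rewrite (mul_star_eq HG (fst p) (fst q)).
    + eapply R1_trans; eauto.
    + symmetry. apply R1_cod; auto.
  - right. exists z. split; auto. rewrite (mul_star_eq HG (fst r) (fst q)).
    + eapply R1_trans; [apply R1_sym; exact G | exact H2].
    + apply R1_cod; auto.
  - right. exists z. split; auto.
    assert (Rq : R1 (lid (fst q), z) (lid (fst q), z'))
      by (eapply R1_trans; [apply R1_sym; exact H2 | exact G1]).
    rewrite (R1_idem _ _ _ _ (idem_mul_star HS _) (idem_mul_star HS _) Rq). exact G2.
Qed.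

Lemma approx_expl_approx p q : approx_expl p q -> approx p q.
Proof.
  intros [H | [z [H1 H2]]]; [apply rst_step, R1_sim; exact H |].
  apply rst_trans with (lid (fst p), z); [apply rst_step, R1_sim; exact H1 |].
  apply rst_trans with (lid (fst q), z); [| apply rst_sym, rst_step, R1_sim; exact H2].
  apply rst_step. unfold glob_sim; simpl. split; [apply H1 | split; [apply H2 |]].
  right. split; [apply (idem_mul_star HS) | split; [apply (idem_mul_star HS) | reflexivity]].
Qed.

Lemma approx_cases p q : approx p q -> p = q \/ approx_expl p q.
Proof.
  intro H. induction H as [p q H | p | p q _ IH | p q r _ IH1 _ IH2].
  - right. apply sim_approx_expl; exact H.
  - left; reflexivity.
  - destruct IH as [-> | H]; [left | right; apply approx_expl_sym]; auto.
  - destruct IH1 as [-> | H1]; destruct IH2 as [-> | H2]; auto.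
    right; eapply approx_expl_trans; eauto.
Qed.

Lemma approx_R1 p q : approx p q -> D p -> c (fst p) = c (fst q) -> R1 p q.
Proof.
  intros H Hp Hc. destruct (approx_cases p q H) as [<- | [H' | [z [H1 H2]]]].
  - apply R1_refl; auto.
  - exact H'.
  - rewrite (mul_star_eq HG (fst p) (fst q) Hc) in H1.
    eapply R1_trans; [exact H1 | apply R1_sym; exact H2].
Qed.

Lemma cls_eq p q : approx p q -> cl p = cl q.
Proof.
  intro H. extensionality r. apply propositional_extensionality. unfold cls. split; intro K.
  - eapply rst_trans; [apply rst_sym; exact H | exact K].
  - eapply rst_trans; [exact H | exact K].
Qed.

Lemma cls_approx p q : cl p = cl q -> approx p q.
Proof. intro H. unfold cls in H. rewrite H. apply rst_refl. Qed.


Local Notation ES := (Es d c mul star Xs th).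
Local Notation ET := (eta d c mul star Xs th).
Local Notation EC := (Ecar d c mul star Xs th).
Local Notation IO := (iota d c mul star Xs th).

Lemma Dsub_iff s p : Dsub d c mul star Xs s p <-> D p /\ c (fst p) = c s.
Proof.
  destruct p as [t x]. unfold Dsub; simpl. split.
  - intros [H1 [H2 _]]. split; auto. rewrite <- H2, (d_star HS); reflexivity.
  - intros [H1 H2]. split; [exact H1 | split; [rewrite (d_star HS); auto |]].
    rewrite (mul_star_eq HG s t) by congruence.
    rewrite (mul_idem_l HG (lid t) t); [exact H1 | apply (idem_mul_star HS) | apply (d_mul_star HS)].
Qed.

Lemma Es_iff s C : ES s C <-> exists p, D p /\ c (fst p) = c s /\ C = cl p.
Proof.
  unfold Es. split.
  - intros [p [Hp ->]]. apply Dsub_iff in Hp. exists p; tauto.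
  - intros [p [H1 [H2 ->]]]. exists p. split; auto. apply Dsub_iff; auto.
Qed.

Lemma D_mul s p : D p -> d s = c (fst p) -> D (mul s (fst p), snd p).
Proof.
  destruct p as [t x]. unfold Dset; simpl. intros H1 H2.
  rewrite (star_mul_mul HG) by exact H2. exact H1.
Qed.

Lemma R1_mul s p q : R1 p q -> d s = c (fst p) ->
  R1 (mul s (fst p), snd p) (mul s (fst q), snd q).
Proof.
  intros H Hs. pose proof (R1_cod p q H) as Hc.
  destruct p as [t x], q as [u y]. destruct H as [H1 [H2 [H3 [H4 H5]]]]. simpl in *.
  unfold R1; simpl. split; [apply (D_mul s (t, x)); auto |].
  split; [apply (D_mul s (u, y)); simpl; congruence |].
  rewrite !(star_mul_mul HG) by congruence. repeat split; auto.
  rewrite !(c_mul HS) by congruence. reflexivity.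
Qed.

Lemma eta_cls s p : D p -> c (fst p) = d s -> ET s (cl p) = cl (mul s (fst p), snd p).
Proof.
  intros Hp Hc. unfold eta. extensionality q. apply propositional_extensionality. split.
  - intros [p' [Hpp' [Hsub Hq]]]. apply Dsub_iff in Hsub. destruct Hsub as [_ Hc'].
    rewrite (c_star HS) in Hc'.
    assert (R : R1 p p') by (apply approx_R1; auto; congruence).
    eapply rst_trans; [| exact Hq]. apply approx_expl_approx. left. apply R1_mul; auto.
  - intro H. exists p. split; [apply rst_refl |].
    split; [apply Dsub_iff; rewrite (c_star HS); auto | exact H].
Qed.

Lemma Es_eta s C : ES (star s) C -> ES s (ET s C).
Proof.
  intro H. apply Es_iff in H. destruct H as [p [H1 [H2 ->]]]. rewrite (c_star HS) in H2.
  rewrite eta_cls by auto. apply Es_iff. exists (mul s (fst p), snd p).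
  split; [apply D_mul; auto | split; [apply (c_mul HS); auto | reflexivity]].
Qed.

Lemma eta_star_eta s C : ES (star s) C -> ET (star s) (ET s C) = C.
Proof.
  intro H. apply Es_iff in H. destruct H as [p [H1 [H2 ->]]]. rewrite (c_star HS) in H2.
  rewrite eta_cls by auto. rewrite eta_cls; simpl.
  - rewrite (mul_star_cancel_l HG) by auto. destruct p; reflexivity.
  - apply D_mul; auto.
  - rewrite (c_mul HS), (d_star HS) by auto. reflexivity.
Qed.

Lemma Es_surj s C : ES s C -> exists C', ES (star s) C' /\ ET s C' = C.
Proof.
  intro H. apply Es_iff in H. destruct H as [p [H1 [H2 ->]]].
  assert (Hd : d (star s) = c (fst p)) by (rewrite (d_star HS); auto).
  exists (cl (mul (star s) (fst p), snd p)). split.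
  - apply Es_iff. exists (mul (star s) (fst p), snd p).
    split; [apply D_mul; auto | split; [apply (c_mul HS); auto | reflexivity]].
  - rewrite eta_cls; simpl.
    + rewrite (mul_star_cancel_r HG) by auto. destruct p; reflexivity.
    + apply D_mul; auto.
    + rewrite (c_mul HS), (c_star HS); auto.
Qed.

Lemma eta_comp s t C : d s = c t -> ES (star t) C ->
  ES (star (mul s t)) C /\ ET (mul s t) C = ET s (ET t C).
Proof.
  intros Hst H. apply Es_iff in H. destruct H as [p [H1 [H2 ->]]]. rewrite (c_star HS) in H2.
  split.
  - apply Es_iff. exists p. split; auto. split; auto. rewrite (c_star HS), (d_mul HS); auto.
  - rewrite (eta_cls t), !eta_cls; simpl; auto.
    + rewrite (mul_assoc HS) by congruence. reflexivity.
    + apply D_mul; congruence.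
    + rewrite (c_mul HS); congruence.
    + rewrite (d_mul HS); congruence.
Qed.

Lemma eta_dom_comp s t C : d s = c t -> ES (star (mul s t)) C ->
  ES (star t) C /\ ES (star s) (ET t C).
Proof.
  intros Hst H. apply Es_iff in H. destruct H as [p [H1 [H2 ->]]].
  rewrite (c_star HS), (d_mul HS) in H2 by auto.
  split.
  - apply Es_iff. exists p. split; auto. split; auto. rewrite (c_star HS); auto.
  - rewrite eta_cls by auto. apply Es_iff. exists (mul t (fst p), snd p).
    split; [apply D_mul; congruence |].
    split; [simpl; rewrite (c_mul HS), (c_star HS); congruence | reflexivity].
Qed.

Lemma eta_global_action : global_action d c mul star EC ES ET.
Proof.
  split; [constructor |].
  - intros s C H. apply Es_iff in H. destruct H as [p [H1 [_ ->]]]. exists p; auto.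
  - exact Es_eta.
  - intros s C C' H H' E. rewrite <- (eta_star_eta s C H), <- (eta_star_eta s C' H'), E.
    reflexivity.
  - exact Es_surj.
  - exact eta_star_eta.
  - intros C [p [Hp ->]]. exists (fst p). apply Es_iff. exists p; auto.
  - intros s t C Hst H _. apply eta_comp; auto.
  - intros s t C [_ [Hc _]] H. apply Es_iff in H. destruct H as [p [H1 [H2 ->]]].
    apply Es_iff. exists p. split; [exact H1 | split; [congruence | reflexivity]].
  - exact eta_dom_comp.
Qed.

Lemma iota_cls e x : idem e -> Xs e x -> IO x = cl (e, x).
Proof.
  intros He Hx. unfold iota. extensionality q. apply propositional_extensionality. split.
  - intros [e' [He' [Hx' Hq]]]. eapply rst_trans; [| exact Hq].
    apply rst_step. unfold glob_sim; simpl.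
    split; [apply D_idem; auto | split; [apply D_idem; auto | right; auto]].
  - intro H. exists e. auto.
Qed.

Lemma iota_in_E x : EC (IO x).
Proof.
  destruct (Xs_cover_idem HS Hpa x I) as [e [He Hx]].
  exists (e, x). split; [apply D_idem; auto | apply iota_cls; auto].
Qed.

Lemma iota_inj x y : IO x = IO y -> x = y.
Proof.
  intro H. destruct (Xs_cover_idem HS Hpa x I) as [e [He Hx]].
  destruct (Xs_cover_idem HS Hpa y I) as [f [Hf Hy]].
  rewrite (iota_cls e x He Hx), (iota_cls f y Hf Hy) in H. apply cls_approx in H.
  destruct (approx_cases _ _ H) as [E | [K | [z [K1 K2]]]].
  - injection E; auto.
  - exact (R1_idem e x f y He Hf K).
  - simpl in K1, K2. rewrite (lid_idem e He) in K1. rewrite (lid_idem f Hf) in K2.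
    rewrite (R1_idem e x e z He He K1). symmetry. exact (R1_idem f y f z Hf Hf K2).
Qed.

(* [[t, x] = eta_t (i x)], since [x] lies in [X_{t^* t}]. *)
Lemma E_orbit_iota C :
  EC C <-> exists g y, (exists x, y = IO x) /\ ES (star g) y /\ C = ET g y.
Proof.
  split.
  - intros [[t x] [Hp ->]]. unfold Dset in Hp; simpl in Hp.
    pose proof (idem_star_mul HS t) as He.
    exists t, (IO x). split; [exists x; reflexivity |].
    rewrite (iota_cls _ x He Hp). split.
    + apply Es_iff. exists (mul (star t) t, x).
      split; [apply D_idem; auto | split; [simpl; rewrite (c_star HS); apply (c_star_mul HS) | reflexivity]].
    + rewrite eta_cls; simpl; [rewrite (mul_star_mul HS); reflexivity | apply D_idem; auto |].
      apply (c_star_mul HS).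
  - intros [g [y [_ [H ->]]]]. apply Es_eta, Es_iff in H.
    destruct H as [p [H1 [_ ->]]]. exists p; auto.
Qed.

Lemma eta_iota_meets (Hne : forall g, exists x, Xs g x) g :
  exists y, (exists x, y = IO x) /\ ES (star g) y /\ (exists x, ET g y = IO x).
Proof.
  destruct (Hne (star g)) as [x Hx].
  pose proof (idem_star_mul HS g) as He.
  assert (Hx' : Xs (mul (star g) g) x).
  { pose proof (Xs_mul_star HS Hpa _ _ Hx) as K. rewrite (star_star HS) in K. exact K. }
  exists (IO x). split; [exists x; reflexivity |].
  rewrite (iota_cls _ x He Hx'). split.
  - apply Es_iff. exists (mul (star g) g, x).
    split; [apply D_idem; auto | split; [simpl; rewrite (c_star HS); apply (c_star_mul HS) | reflexivity]].
  - exists (th g x). rewrite eta_cls; simpl; [| apply D_idem; auto | apply (c_star_mul HS)].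
    rewrite (mul_star_mul HS).
    assert (Hy : Xs (lid g) (th g x)) by apply (Xs_mul_star HS Hpa), (th_maps Hpa), Hx.
    rewrite (iota_cls _ _ (idem_mul_star HS g) Hy). apply cls_eq, approx_expl_approx.
    left. apply R1_lid; auto.
Qed.

Context (leX : X -> X -> Prop).
Hypothesis Hord : ordered_action star (fun _ : X => True) leX Xs th.

Local Notation LE := (leE d c mul star Xs th leX).

Lemma Xs_le s x y : Xs s y -> leX x y -> Xs s x.
Proof. intros Hy Hle. exact (proj1 Hord s x y Hy I Hle). Qed.

Lemma th_le s x y : Xs (star s) x -> Xs (star s) y -> leX x y -> leX (th s x) (th s y).
Proof. intros Hx Hy. apply (proj2 Hord s x y Hx Hy). Qed.

Lemma R1_le_transport r y x q : R1 (r, y) q -> leX x y ->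
  exists x', D (fst q, x') /\ leX x' (snd q) /\ R1 (r, x) (fst q, x').
Proof.
  destruct q as [t z]. intros [H1 [H2 [H3 [H4 H5]]]] Hle. simpl in *.
  assert (Hs : star (mul (star t) r) = mul (star r) t) by (apply (star_mul_starl HG); auto).
  assert (Hx : Xs (mul (star r) t) x) by (eapply Xs_le; eauto).
  assert (HD : D (t, th (mul (star t) r) x)).
  { unfold Dset; simpl.
    rewrite (idem_eq HG (mul (star t) t) (mul (mul (star t) r) (star (mul (star t) r)))).
    - apply (Xs_mul_star HS Hpa), (th_maps Hpa). rewrite Hs; exact Hx.
    - apply (idem_star_mul HS).
    - apply (idem_mul_star HS).
    - rewrite (d_star_mul HS), (d_mul_star HS), (c_mul HS), (c_star HS);
        [reflexivity | rewrite (d_star HS); congruence]. }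
  exists (th (mul (star t) r) x). split; [exact HD | split].
  - rewrite <- H5. apply th_le; rewrite ?Hs; auto.
  - unfold R1; simpl. repeat split; auto. unfold Dset in *; simpl in *. eapply Xs_le; eauto.
Qed.

Lemma approx_le_transport r y x q : D (r, y) -> approx (r, y) q -> leX x y ->
  exists x', D (fst q, x') /\ leX x' (snd q) /\ approx (r, x) (fst q, x').
Proof.
  intros Hd Hq Hle. destruct (approx_cases _ _ Hq) as [<- | [H | [z [H1 H2]]]].
  - exists x. simpl. split; [| split; [exact Hle | apply rst_refl]].
    unfold Dset in *; simpl in *. eapply Xs_le; eauto.
  - destruct (R1_le_transport r y x q H Hle) as [x' [K1 [K2 K3]]].
    exists x'. split; [auto | split; [auto |]]. apply approx_expl_approx; left; auto.
  - simpl in H1. destruct (R1_le_transport r y x _ H1 Hle) as [w [K1 [K2 K3]]]. simpl in *.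
    assert (Hz : Xs (lid (fst q)) z) by (apply (D_idem _ _ (idem_mul_star HS _)), H2).
    assert (Hw : Xs (lid (fst q)) w) by (eapply Xs_le; eauto).
    destruct (R1_le_transport _ z w q (R1_sym _ _ H2) K2) as [x' [L1 [L2 L3]]].
    exists x'. split; [auto | split; [auto |]].
    eapply rst_trans; [apply approx_expl_approx; left; exact K3 |].
    eapply rst_trans; [| apply approx_expl_approx; left; exact L3].
    apply rst_step. unfold glob_sim; simpl.
    split; [exact K1 | split; [apply (D_idem _ _ (idem_mul_star HS _)), Hw |]]. right.
    split; [apply (idem_mul_star HS) | split; [apply (idem_mul_star HS) | reflexivity]].
Qed.

Lemma leE_cls t x y : D (t, x) -> D (t, y) -> leX x y -> LE (cl (t, x)) (cl (t, y)).
Proof.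
  intros Hx Hy Hle. exists t, x, t, y.
  split; [auto | split; [reflexivity | split; [auto | split; [reflexivity |]]]].
  exists t, y, x. split; [auto | split; [apply rst_refl | split; [auto | apply rst_refl]]].
Qed.

Lemma leE_cls_inv C q : LE C (cl q) -> D q ->
  exists x, D (fst q, x) /\ leX x (snd q) /\ C = cl (fst q, x).
Proof.
  intros [s [x [t [y [Hsx [-> [Hty [HC' [r [y' [x' [Hry [Hap1 [Hle Hap2]]]]]]]]]]]]]] Hq.
  assert (Hq' : approx (r, y') q) by (eapply rst_trans; [exact Hap1 | apply cls_approx; auto]).
  destruct (approx_le_transport r y' x' q Hry Hq' Hle) as [x'' [K1 [K2 K3]]].
  exists x''. split; [auto | split; [auto |]]. apply cls_eq.
  eapply rst_trans; [apply rst_sym; exact Hap2 | exact K3].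
Qed.

Lemma R1_same_arrow t x y : R1 (t, x) (t, y) -> x = y.
Proof.
  intros [H1 [_ [_ [_ H5]]]]. simpl in *. rewrite <- H5. symmetry.
  apply (th_idem HS Hpa); auto. apply (idem_star_mul HS).
Qed.

Section PartialOrder.
Hypothesis leX_refl : forall x, leX x x.
Hypothesis leX_antisym : forall x y, leX x y -> leX y x -> x = y.
Hypothesis leX_trans : forall x y z, leX x y -> leX y z -> leX x z.

Lemma leE_partial_order : partial_order_on EC LE.
Proof.
  split; [| split].
  - intros C [[t y] [Hp ->]]. apply leE_cls; auto.
  - intros C C' _ [[t y] [Hq ->]] H1 H2.
    destruct (leE_cls_inv C (t, y) H1 Hq) as [a [Ka [La ->]]]. simpl in *.
    destruct (leE_cls_inv _ (t, a) H2 Ka) as [b [Kb [Lb Eb]]]. simpl in *.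
    assert (b = y) as ->.
    { apply (R1_same_arrow t). apply approx_R1; auto. apply cls_approx. symmetry; exact Eb. }
    rewrite (leX_antisym a y La Lb). reflexivity.
  - intros C C' C'' _ _ [[t y] [Hq ->]] H1 H2.
    destruct (leE_cls_inv C' (t, y) H2 Hq) as [a [Ka [La ->]]]. simpl in *.
    destruct (leE_cls_inv C (t, a) H1 Ka) as [b [Kb [Lb ->]]]. simpl in *.
    apply leE_cls; eauto.
Qed.

End PartialOrder.

Lemma eta_le s C C' : ES (star s) C -> ES (star s) C' -> LE C C' -> LE (ET s C) (ET s C').
Proof.
  intros H H' Hle. apply Es_iff in H'. destruct H' as [[t y] [Q1 [Q2 ->]]].
  rewrite (c_star HS) in Q2.
  destruct (leE_cls_inv C (t, y) Hle Q1) as [x [K1 [K2 ->]]]. simpl in *.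
  rewrite !eta_cls by auto.
  apply leE_cls; [apply (D_mul s (t, x)) | apply (D_mul s (t, y)) | ]; auto.
Qed.

Lemma eta_ordered_action : ordered_action star EC LE ES ET.
Proof.
  split.
  - intros s C C' H _ Hle. apply Es_iff in H. destruct H as [q [Q1 [Q2 ->]]].
    destruct (leE_cls_inv C q Hle Q1) as [x [K1 [K2 ->]]].
    apply Es_iff. eexists; split; [exact K1 | split; [exact Q2 | reflexivity]].
  - intros s C C' H H'. split; [apply eta_le; auto |]. intro Hle.
    rewrite <- (eta_star_eta s C H), <- (eta_star_eta s C' H').
    apply eta_le; auto; rewrite (star_star HS); apply Es_eta; auto.
Qed.

Lemma leE_iota x y : LE (IO x) (IO y) <-> leX x y.
Proof.
  destruct (Xs_cover_idem HS Hpa y I) as [e [He Hy]]. rewrite (iota_cls e y He Hy). split.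
  - intro Hle. destruct (leE_cls_inv _ (e, y) Hle (proj2 (D_idem e y He) Hy)) as [x' [K1 [K2 K3]]].
    simpl in *. apply (D_idem e x' He) in K1.
    rewrite <- (iota_cls e x' He K1) in K3. apply iota_inj in K3. subst; exact K2.
  - intro Hle. assert (Hx : Xs e x) by (eapply Xs_le; eauto).
    rewrite (iota_cls e x He Hx). apply leE_cls; auto; apply D_idem; auto.
Qed.

Lemma iota_downward C y : LE C (IO y) -> exists x, C = IO x.
Proof.
  destruct (Xs_cover_idem HS Hpa y I) as [e [He Hy]]. rewrite (iota_cls e y He Hy). intro Hle.
  destruct (leE_cls_inv C (e, y) Hle (proj2 (D_idem e y He) Hy)) as [x [K1 [_ ->]]].
  exists x. symmetry. apply iota_cls; auto. apply (D_idem e x He). exact K1.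
Qed.

End Globalization.

Theorem mainTheorem9
  (O A OX X : Type)
  (d c : A -> O) (mul : A -> A -> A) (star : A -> A)
  (dX cX : X -> OX) (mulX : X -> X -> X) (starX : X -> X)
  (Xs : A -> X -> Prop) (th : A -> X -> X)
  (HG : is_groupoid d c mul star)
  (HX : is_semilatticeoid dX cX mulX starX)
  (Hpa : partial_action d c mul star (fun _ : X => True) Xs th)
  (Hord : ordered_action star (fun _ : X => True) (natle dX cX mulX) Xs th)
  (Hne : forall g : A, exists x, Xs g x) :
  mcalister_triple d c mul star
    (Ecar d c mul star Xs th)
    (leE d c mul star Xs th (natle dX cX mulX))
    (fun C => exists x : X, C = iota d c mul star Xs th x)
    (Es d c mul star Xs th)
    (eta d c mul star Xs th).
Proof.
  split; [exact HG |].
  split; [exact (leE_partial_order HG Hpa _ Hord (natle_refl HX)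
                   (natle_antisym HX) (natle_trans HX)) |].
  split; [intros C [x ->]; apply (iota_in_E HG Hpa) |].
  split; [intros C C' [y ->] _; apply (iota_downward HG Hpa _ Hord) |].
  split.
  { exists OX, X, dX, cX, mulX, starX, (iota d c mul star Xs th).
    split; [exact HX |].
    split; [intro x; exists x; reflexivity |].
    split; [exact (iota_inj HG Hpa) |].
    split; [intros C [x ->]; exists x; reflexivity |].
    intros x y. symmetry. apply (leE_iota HG Hpa _ Hord). }
  split; [exact (eta_global_action HG Hpa) |].
  split; [exact (eta_ordered_action HG Hpa _ Hord) |].
  split; [exact (E_orbit_iota HG Hpa) |].
  exact (eta_iota_meets HG Hpa Hne).
Qed.
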